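(* Let $p,k\ge 1$ be integers, let $a_1,\dots,a_k\in\mathbb{R}$, and let $\mathbf{f}:\mathbb{R}^p\to\mathbb{R}^p$ be a differentiable flux. Let $\mathbb{M}_1,\dots,\mathbb{M}_k:\mathbb{R}^p\to\mathbb{R}^p$ be differentiable maps satisfying, for all $\mathbf{u}$, $\sum_{i=1}^k \mathbb{M}_i(\mathbf{u})=\mathbf{u}$ and $\sum_{i=1}^k a_i\mathbb{M}_i(\mathbf{u})=\mathbf{f}(\mathbf{u})$, and set $\mathbf{m}_2(\mathbf{u})=\sum_{i=1}^k a_i^2\mathbb{M}_i(\mathbf{u})$. Fix $\mathbf{u}$ and suppose there exists a strictly convex entropy $\eta(\mathbf{u})$ with Hessian matrix $\mathbf{A}_0$ such that (1) $\mathbf{A}_0\mathbf{f}'(\mathbf{u})$ is symmetric, (2) $\mathbf{A}_0\mathbb{M}_i'(\mathbf{u})$ is symmetric positive definite for all $i$, and (3) $\min_i|a_i|>\rho(\mathbf{f}'(\mathbf{u}))$ (spectral radius). Let $\mathbf{D}=\mathbf{D}(\mathbf{u})$ be a $p\times p$ matrix and assume that $\mathbf{D}\mathbf{A}_0^{-1}$ is symmetric and has positive eigenvalues. Let $\varepsilon>0$, $\omega>0$, and define the $p\times p$ matrix $\varepsilon\tilde{\Omega}^{-1}$ by $$\varepsilon\,\omega\,\tilde{\Omega}^{-1}=\mathbf{D}(\mathbf{u})\left[\mathbf{m}_2'(\mathbf{u})-(\mathbf{f}'(\mathbf{u}))^2\right]^{-1}.$$ Then $\varepsilon\tilde{\Omega}^{-1}$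 has real non-negative eigenvalues.
   Context: Primes denote Jacobian matrices with respect to $\mathbf{u}$. Here $\mathbf{D}$ is the diffusion matrix of the target convection-diffusion system $\partial_t\mathbf{u}+\partial_x\mathbf{f}(\mathbf{u})=\partial_x(\mathbf{D}\partial_x\mathbf{u})$, $\tilde{\Omega}$ is the block of the collision matrix $\Omega=\mathbf{I}_k\otimes\tilde{\Omega}$ of the kinetic model, $\varepsilon$ is the Knudsen number and $\omega=\ell/\|\Lambda\|$ with $\ell$ a characteristic length. Under the stated hypotheses $\mathbf{m}_2'(\mathbf{u})-(\mathbf{f}'(\mathbf{u}))^2$ is invertible, so the defining relation makes sense. *)

From mathcomp Require Import all_boot all_algebra.
From mathcomp Require Import all_classical all_reals all_analysis.
From mathcomp Require Export complex.
Import GRing.Theory Num.Theory.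
Set Implicit Arguments. Unset Strict Implicit. Unset Printing Implicit Defensive.
Local Open Scope ring_scope.

(* Usual Jacobian matrix f'(u) (rows = components of f, columns = variables).
   MathComp-Analysis' [jacobian] acts on row vectors by right multiplication
   ('D_v f u = v *m jacobian f u), so it is the transpose of the usual one. *)
Definition Jac (R : realType) (n : nat) (f : 'rV[R]_n -> 'rV[R]_n) (u : 'rV[R]_n)
  : 'M[R]_n := (jacobian f u)^T.

Definition cplx_mx (R : realType) (n : nat) (A : 'M[R]_n) : 'M[R[i]]_n :=
  map_mx (fun x : R => (x%:C)%C) A.

Definition spd (R : realType) (n : nat) (A : 'M[R]_n) : Prop :=
  A^T = A /\ forall v : 'rV[R]_n, v != 0 -> 0 < (v *m A *m v^T) 0 0.

(* Write J := f'(u) and J_i := M_i'(u).  Differentiating the moment relations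
   gives sum_i J_i = I and sum_i a_i J_i = J, whence
     A0 (m2'(u) - J^2) = sum_i (a_i - J)^T (A0 J_i) (a_i - J).
   Every term is positive semidefinite, and definite when a_i is not an
   eigenvalue of J, which (3) guarantees; so G := A0 (m2'(u) - J^2) is
   symmetric positive definite.  Now eps Omega^-1 = omega^-1 P A0 B^-1 with
   P := D A0^-1 and B := m2'(u) - J^2.  If v P A0 B^-1 = l v with v <> 0, then
   y := l v A0^-1 satisfies y G y^H = conj(l) (v P v^H), and both Hermitian
   forms are positive, so l > 0. *)

From mathcomp Require Import all_boot all_order all_algebra.
From mathcomp Require Import all_classical all_reals all_analysis.
From mathcomp Require Import complex.
Import Order.TTheory GRing.Theory Num.Theory.
Set Implicit Arguments. Unset Strict Implicit. Unset Printing Implicit Defensive.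
Local Open Scope ring_scope.
Local Open Scope sesquilinear_scope.

Definition posdefmx (R : numDomainType) n (A : 'M[R]_n) : Prop :=
  forall v : 'rV[R]_n, v != 0 -> 0 < (v *m A *m v^T) 0 0.

Definition hposdefmx (C : numClosedFieldType) n (A : 'M[C]_n) : Prop :=
  forall v : 'rV[C]_n, v != 0 -> 0 < (v *m A *m v ^t*) 0 0.

Lemma posdefmx_unitmx (R : realFieldType) n (A : 'M[R]_n) :
  posdefmx A -> A \in unitmx.
Proof.
move=> Apos; rewrite unitmxE unitfE; apply/negP => /det0P [v v0 vA].
by have := Apos v v0; rewrite vA mul0mx mxE ltxx.
Qed.

Lemma posdefmx_eigenvalue_gt0 (R : realFieldType) n (A : 'M[R]_n) :
  posdefmx A -> forall r, eigenvalue A r -> 0 < r.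
Proof.
move=> Apos r /eigenvalueP [v vA v0].
have := Apos v v0; rewrite vA -scalemxAl mxE.
have vv_ge0 : 0 <= (v *m v^T) 0 0.
  by rewrite mxE; apply: sumr_ge0 => j _; rewrite mxE -expr2 sqr_ge0.
by apply: contraTT; rewrite -!leNgt => r_le0; apply: mulr_le0_ge0.
Qed.

Lemma posdefmx_sum_congruence (R : realFieldType) n k
    (T S : 'I_k -> 'M[R]_n) (i0 : 'I_k) :
  (forall i, posdefmx (S i)) -> T i0 \in unitmx ->
  posdefmx (\sum_(i < k) (T i)^T *m S i *m T i).
Proof.
move=> Spos Ti0_unit v v0.
have termE i : (v *m ((T i)^T *m S i *m T i) *m v^T) 0 0 =
    (v *m (T i)^T *m S i *m (v *m (T i)^T)^T) 0 0.
  by rewrite trmx_mul trmxK !mulmxA.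
have term_ge0 i : 0 <= (v *m ((T i)^T *m S i *m T i) *m v^T) 0 0.
  rewrite termE; have [->|vT0] := eqVneq (v *m (T i)^T) 0.
    by rewrite !mul0mx mxE.
  exact/ltW/Spos.
have vT0 : v *m (T i0)^T != 0.
  have Ti0T_unit : (T i0)^T \in unitmx by rewrite unitmx_tr.
  by apply: contra v0 => /eqP vT0; rewrite -(mulmxK Ti0T_unit v) vT0 mul0mx.
rewrite mulmx_sumr mulmx_suml summxE (bigD1 i0) //= ltr_wpDr ?termE ?Spos //.
exact: sumr_ge0.
Qed.

Lemma scalar_mx_subr_unitmx (F : fieldType) n (A : 'M[F]_n) a :
  ~~ eigenvalue A a -> a%:M - A \in unitmx.
Proof.
apply: contraR; rewrite unitmxE unitfE negbK => /det0P [v v0 vA].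
apply/eigenvalueP; exists v => //.
by move/eqP: vA; rewrite mulmxBr mul_mx_scalar subr_eq0 => /eqP <-.
Qed.

Lemma eigenvalueZ (F : fieldType) n (A : 'M[F]_n) c z :
  eigenvalue A z -> eigenvalue (c *: A) (c * z).
Proof.
move=> /eigenvalueP [v vA v0]; apply/eigenvalueP; exists v => //.
by rewrite -scalemxAr vA scalerA mulrC.
Qed.

Section HermitianMatrices.
Variables (C : numClosedFieldType) (n : nat).
Implicit Types (A : 'M[C]_n) (v : 'rV[C]_n).

Lemma hermitian_trC_mulmx A v : A \is hermsymmx -> (v *m A) ^t* = A *m v ^t*.
Proof.
move=> /is_hermitianmxP A_herm.
by rewrite trmx_mul map_mxM {2}A_herm expr0 scale1r.
Qed.

Lemma hermitian_eigenvalue_real A z : A \is hermsymmx -> eigenvalue A z ->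
  z \is Num.real.
Proof.
move=> A_herm /eigenvalueP [v vA v0].
have vAv : (v *m A *m v ^t*) 0 0 = z^* * (v *m v ^t*) 0 0.
  rewrite -mulmxA -hermitian_trC_mulmx // vA.
  by rewrite linearZ map_mxZ /= -scalemxAr mxE.
have: (v *m A *m v ^t*) 0 0 = z * (v *m v ^t*) 0 0 by rewrite vA -scalemxAl mxE.
rewrite vAv CrealE => /mulIf -> //.
by rewrite gt_eqF // -dotmxE dnorm_gt0.
Qed.

Lemma hermitian_hposdefmx A : A \is hermsymmx ->
  (forall z, eigenvalue A z -> 0 < z) -> hposdefmx A.
Proof.
move=> A_herm A_pos v v0.
have /orthomx_spectralP A_diag := hermitian_normalmx A_herm.
set U := spectralmx A in A_diag; set X := spectral_diag A in A_diag.
have U_unitary : U \is unitarymx := spectral_unitarymx A.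
have U_unit : U \in unitmx := spectral_unit A.
have X_pos j : 0 < X 0 j.
  apply: A_pos; apply/eigenvalueP; exists (row j U).
    rewrite -row_mul {1}A_diag !mulmxA mulmxV // mul1mx.
    by rewrite row_mul row_diag_mx -scalemxAl -rowE.
  rewrite rowE mulmx_free_eq0 ?row_free_unit //.
  by apply/eqP => /matrixP/(_ 0 j)/eqP; rewrite !mxE !eqxx oner_eq0.
(* In the unitary eigenbasis the form reads sum_j X_j |w_j|^2. *)
set w := v *m U ^t*.
have w0 : w != 0.
  by rewrite mulmx_free_eq0 // row_free_unit unitarymx_unit ?trmxC_unitary.
have -> : v *m A *m v ^t* = w *m diag_mx X *m w ^t*.
  rewrite {1}A_diag invmx_unitary // /w !mulmxA trmx_mul map_mxM trmxCK.
  by rewrite !mulmxA.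
clearbody w; have [j wj0] : exists j, w 0 j != 0.
  apply/existsP; apply: contraNT w0 => /existsPn w_eq0.
  by apply/eqP/rowP => j; move/negPn/eqP: (w_eq0 j) => ->; rewrite mxE.
rewrite mul_mx_diag mxE (bigD1 j) //= ltr_wpDr ?sumr_ge0 // => [i _|];
  rewrite !mxE mulrAC.
- by rewrite mulr_ge0 ?mul_conjC_ge0 ?ltW.
- by rewrite pmulr_lgt0 ?mul_conjC_gt0.
Qed.

Lemma hposdefmx_eigenvalue_gt0 (P S B : 'M[C]_n) z :
  hposdefmx P -> S \is hermsymmx -> S \in unitmx -> B \in unitmx ->
  hposdefmx (S *m B) -> eigenvalue (P *m S *m invmx B) z -> 0 < z.
Proof.
move=> P_pos S_herm S_unit B_unit SB_pos /eigenvalueP [v vE v0].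
have vPS : v *m P *m S = z *: v *m B by rewrite -vE !mulmxA mulmxKV.
have z0 : z != 0.
  have vP0 : v *m P != 0.
    by apply: contraTneq (P_pos v v0) => ->; rewrite mul0mx mxE ltxx.
  have : v *m P *m S != 0 by rewrite mulmx_free_eq0 ?row_free_unit.
  by apply: contraNneq => z0; rewrite vPS z0 scale0r mul0mx.
set y := z *: v *m invmx S.
have yS : y *m S = z *: v by rewrite mulmxKV.
have y0 : y != 0.
  have zv0 : z *: v != 0 by rewrite scaler_eq0 negb_or z0 v0.
  by apply: contraNneq zv0 => y0; rewrite -yS y0 mul0mx.
have yGy : (y *m (S *m B) *m y ^t*) 0 0 = z^* * (v *m P *m v ^t*) 0 0.
  rewrite mulmxA yS -vPS -mulmxA -hermitian_trC_mulmx // yS.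
  by rewrite linearZ map_mxZ /= -scalemxAr mxE.
have : 0 < z^* by rewrite -(pmulr_lgt0 _ (P_pos v v0)) -yGy SB_pos.
by move=> /ltW; rewrite conjC_ge0 lt_def z0.
Qed.

End HermitianMatrices.

Section RealSymmetricMatrices.
Variables (R : rcfType) (n : nat).
Implicit Types (A : 'M[R]_n).

Lemma real_complex_hermitian A :
  A^T = A -> map_mx (real_complex R) A \is hermsymmx.
Proof.
move=> A_sym; apply: realsym_hermsym.
  by apply/is_hermitianmxP; rewrite expr0 scale1r map_mx_id // map_trmx A_sym.
by apply/mxOverP => i j; rewrite mxE; apply/complex_realP; exists (A i j).
Qed.

Lemma real_complex_hposdefmx A : A^T = A ->
  (forall r, eigenvalue A r -> 0 < r) -> hposdefmx (map_mx (real_complex R) A).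
Proof.
move=> A_sym A_pos; have A_herm := real_complex_hermitian A_sym.
apply: (hermitian_hposdefmx A_herm) => z z_eig.
have z_real := hermitian_eigenvalue_real A_herm z_eig.
rewrite -(RRe_real z_real) in z_eig *.
by rewrite ltcR A_pos // -(eigenvalue_map (real_complex R)).
Qed.

End RealSymmetricMatrices.

Lemma moment_gap_congruence (R : comNzRingType) n k (a : 'I_k -> R)
    (A0 J : 'M[R]_n) (Ji : 'I_k -> 'M[R]_n) :
  A0^T = A0 -> (A0 *m J)^T = A0 *m J ->
  \sum_(i < k) Ji i = 1%:M -> \sum_(i < k) a i *: Ji i = J ->
  A0 *m (\sum_(i < k) a i ^+ 2 *: Ji i - J *m J) =
  \sum_(i < k) ((a i)%:M - J)^T *m (A0 *m Ji i) *m ((a i)%:M - J).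
Proof.
move=> A0_sym A0J_sym Ji_sum aJi_sum.
have JA0 : J^T *m A0 = A0 *m J by rewrite -A0J_sym trmx_mul A0_sym.
have termE i : ((a i)%:M - J)^T *m (A0 *m Ji i) *m ((a i)%:M - J) =
    A0 *m (a i ^+ 2 *: Ji i) - A0 *m (a i *: Ji i) *m J
    - J^T *m A0 *m (a i *: Ji i) + J^T *m A0 *m Ji i *m J.
  have -> : ((a i)%:M - J)^T = (a i)%:M - J^T by rewrite raddfB /= tr_scalar_mx.
  rewrite mulmxBl mul_scalar_mx !mulmxBr !mul_mx_scalar.
  rewrite scalerBr scalerA -expr2 mulmxBl -!scalemxAl -!scalemxAr !mulmxA.
  by rewrite opprB addrA -scalemxAl addrAC; congr (_ + _); apply: addrAC.
rewrite (eq_bigr _ (fun i _ => termE i)) !big_split /= !sumrN.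
rewrite -!mulmx_sumr -!mulmx_suml -!mulmx_sumr aJi_sum Ji_sum mulmx1 JA0.
by rewrite mulmxBr mulmxA subrK.
Qed.

Lemma moment_gap_spd (R : realFieldType) n k (a : 'I_k -> R)
    (A0 J : 'M[R]_n) (Ji : 'I_k -> 'M[R]_n) (i0 : 'I_k) :
  A0^T = A0 -> (A0 *m J)^T = A0 *m J ->
  \sum_(i < k) Ji i = 1%:M -> \sum_(i < k) a i *: Ji i = J ->
  (forall i, (A0 *m Ji i)^T = A0 *m Ji i /\ posdefmx (A0 *m Ji i)) ->
  ~~ eigenvalue J (a i0) ->
  let G := A0 *m (\sum_(i < k) a i ^+ 2 *: Ji i - J *m J) in
  G^T = G /\ posdefmx G.
Proof.
move=> A0_sym A0J_sym Ji_sum aJi_sum A0Ji_spd a_not_eig G.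
rewrite /G (moment_gap_congruence A0_sym A0J_sym Ji_sum aJi_sum); split.
  rewrite linear_sum; apply: eq_bigr => i _ /=.
  by rewrite trmx_mul trmx_mul trmxK (A0Ji_spd i).1 mulmxA.
apply: (posdefmx_sum_congruence (i0 := i0)) => [i|].
  exact: (A0Ji_spd i).2.
exact: scalar_mx_subr_unitmx.
Qed.

Lemma spd_mulmx_eigenvalue_gt0 (R : rcfType) n (P A0 B : 'M[R]_n) z :
  P^T = P -> (forall r, eigenvalue P r -> 0 < r) ->
  A0^T = A0 /\ posdefmx A0 -> (A0 *m B)^T = A0 *m B /\ posdefmx (A0 *m B) ->
  eigenvalue (map_mx (real_complex R) (P *m A0 *m invmx B)) z -> 0 < z.
Proof.
move=> P_sym P_pos [A0_sym A0_pos] [G_sym G_pos].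
have B_unit : B \in unitmx.
  by have := posdefmx_unitmx G_pos; rewrite unitmx_mul => /andP [].
rewrite !map_mxM map_invmx; apply: hposdefmx_eigenvalue_gt0.
- exact: real_complex_hposdefmx.
- exact: real_complex_hermitian.
- by rewrite map_unitmx posdefmx_unitmx.
- by rewrite map_unitmx.
- rewrite -map_mxM; apply: real_complex_hposdefmx G_sym _.
  exact: posdefmx_eigenvalue_gt0.
Qed.

Lemma diff_lincomb (R : numFieldType) (V W : normedModType R) k
    (c : 'I_k -> R) (g : 'I_k -> V -> W) x :
  (forall i, differentiable (g i) x) ->
  forall w, 'd (fun v => \sum_(i < k) c i *: g i v) x w =
            \sum_(i < k) c i *: 'd (g i) x w.
Proof.
move=> g_diff.
have -> : (fun v => \sum_(i < k) c i *: g i v) = \sum_(i < k) c i *: g i.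
  by rewrite fct_sumE.
suff [_ ->] : is_diff x (\sum_(i < k) c i *: g i)
                   (\sum_(i < k) c i *: ('d (g i) x : V -> W)).
  by move=> w; rewrite fct_sumE.
elim/big_rec2: _ => [|i dF F _ IH]; first exact: is_diff_cst.
have cgi_diff := is_diffZ (c i) (differentiableP (g_diff i)).
exact: (is_diffD cgi_diff IH).
Qed.

Lemma jacobian_lincomb (R : numFieldType) n m k (c : 'I_k -> R)
    (g : 'I_k -> 'rV[R]_n -> 'rV[R]_m) u :
  (forall i, differentiable (g i) u) ->
  jacobian (fun v => \sum_(i < k) c i *: g i v) u =
  \sum_(i < k) c i *: jacobian (g i) u.
Proof.
move=> g_diff; apply/row_matrixP => j.
rewrite !rowE /jacobian mul_rV_lin1 mulmx_sumr diff_lincomb //.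
by apply: eq_bigr => i _; rewrite -scalemxAr mul_rV_lin1.
Qed.

Lemma Jac_lincomb (R : realType) n k (c : 'I_k -> R)
    (g : 'I_k -> 'rV[R]_n -> 'rV[R]_n) u :
  (forall i, differentiable (g i) u) ->
  Jac (fun v => \sum_(i < k) c i *: g i v) u = \sum_(i < k) c i *: Jac (g i) u.
Proof.
move=> g_diff; rewrite /Jac jacobian_lincomb // linear_sum.
by apply: eq_bigr => i _; rewrite linearZ.
Qed.

Lemma Jac_id (R : realType) n (u : 'rV[R]_n) : Jac id u = 1%:M.
Proof. by apply/matrixP => i j; rewrite !mxE diff_val mxE. Qed.

Lemma Jac_moment0 (R : realType) p k (M : 'I_k -> 'rV[R]_p -> 'rV[R]_p) u :
  (forall i, differentiable (M i) u) -> (forall v, \sum_(i < k) M i v = v) ->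
  \sum_(i < k) Jac (M i) u = 1%:M.
Proof.
move=> M_diff M_sum.
have sum_id : (fun v => \sum_(i < k) 1 *: M i v) = id.
  apply/funext => v; rewrite -[RHS]M_sum.
  by apply: eq_bigr => i _; rewrite scale1r.
rewrite -(Jac_id u) -sum_id Jac_lincomb //.
by apply: eq_bigr => i _; rewrite scale1r.
Qed.

Lemma Jac_moment1 (R : realType) p k (a : 'I_k -> R)
    (f : 'rV[R]_p -> 'rV[R]_p) (M : 'I_k -> 'rV[R]_p -> 'rV[R]_p) u :
  (forall i, differentiable (M i) u) ->
  (forall v, \sum_(i < k) a i *: M i v = f v) ->
  \sum_(i < k) a i *: Jac (M i) u = Jac f u.
Proof.
move=> M_diff M_flux.
by rewrite -(Jac_lincomb a M_diff); congr Jac; apply/funext => v; exact: M_flux.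
Qed.

Theorem corollary2 (R : realType) (p k : nat) (hp : (0 < p)%N) (hk : (0 < k)%N)
  (a : 'I_k -> R) (f : 'rV[R]_p -> 'rV[R]_p) (M : 'I_k -> 'rV[R]_p -> 'rV[R]_p)
  (f_diff : forall v, differentiable f v)
  (M_diff : forall i v, differentiable (M i) v)
  (hsum : forall v, \sum_(i < k) M i v = v)
  (hflux : forall v, \sum_(i < k) a i *: M i v = f v)
  (u : 'rV[R]_p) (A0 : 'M[R]_p)
  (hA0 : spd A0)
  (h1 : (A0 *m Jac f u)^T = A0 *m Jac f u)
  (h2 : forall i, spd (A0 *m Jac (M i) u))
  (h3 : forall (i : 'I_k) (z : R[i]), eigenvalue (cplx_mx (Jac f u)) z ->
          `|z| < (`|a i|)%:C%C)
  (D : 'M[R]_p)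
  (hDsym : (D *m invmx A0)^T = D *m invmx A0)
  (hDpos : forall x : R, eigenvalue (D *m invmx A0) x -> 0 < x)
  (eps omega : R) (heps : 0 < eps) (homega : 0 < omega)
  (Omega : 'M[R]_p) (hOmega : Omega \in unitmx)
  (hdef : (eps * omega) *: invmx Omega =
          D *m invmx (Jac (fun v => \sum_(i < k) (a i ^+ 2) *: M i v) u
                      - Jac f u *m Jac f u)) :
  forall z : R[i], eigenvalue (cplx_mx (eps *: invmx Omega)) z -> 0 <= z.
Proof.
move=> z; have [A0_sym A0_pos] := hA0; set J := Jac f u in h1 h3 hdef.
rewrite Jac_lincomb // in hdef.
set B := \sum_(i < k) a i ^+ 2 *: Jac (M i) u - J *m J in hdef.
pose i0 := Ordinal hk.
have a_not_eig : ~~ eigenvalue J (a i0).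
  rewrite -(eigenvalue_map (real_complex R)); apply/negP => /(h3 i0).
  by move=> /lt_le_trans /(_ (normc_ge_Re (a i0)%:C%C)); rewrite ltxx.
have G_spd : spd (A0 *m B).
  apply: moment_gap_spd A0_sym h1 _ _ h2 a_not_eig.
    exact: Jac_moment0 (M_diff^~ u) hsum.
  exact: Jac_moment1 (M_diff^~ u) hflux.
have Omega_eq :
    eps *: invmx Omega = omega^-1 *: (D *m invmx A0 *m A0 *m invmx B).
  rewrite mulmxKV ?posdefmx_unitmx // -hdef scalerA mulrCA.
  by rewrite mulVf ?gt_eqF // mulr1.
have omegaC_gt0 : (0 < omega%:C :> R[i])%C by rewrite ltcR.
have -> : cplx_mx (eps *: invmx Omega) =
          map_mx (real_complex R) (eps *: invmx Omega) by [].
rewrite Omega_eq map_mxZ rmorphV ?unitfE ?gt_eqF //.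
move=> /(eigenvalueZ (omega%:C)%C).
rewrite scalerA mulfV ?gt_eqF // scale1r.
move=> /(spd_mulmx_eigenvalue_gt0 hDsym hDpos hA0 G_spd).
by rewrite pmulr_rgt0 // => /ltW.
Qed.
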